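(* Let $G$ be a directed graph with real edge weights and no cycle of negative or zero weight, and let $(s_1,t_1),(s_2,t_2)$ be vertex pairs with $t_i$ reachable from $s_i$. Let $k^*$ be the minimum, over all pairs $(Q_1,Q_2)$ with $Q_i$ a shortest $s_i$–$t_i$ path, of the number of common vertices of $Q_1,Q_2$ outside $\{s_1,t_1\}\cap\{s_2,t_2\}$. Let $P_1,P_2$ be shortest paths from $s_1$ to $t_1$ and from $s_2$ to $t_2$ respectively that intersect in exactly $k^*$ internal vertices, and let $(u,v)$ be a concordant pair for $P_1,P_2$. Then the subpaths $P_1[u,v]$ and $P_2[u,v]$ have exactly $\delta(u,v)$ vertices in common, and these common vertices are precisely the $(u,v)$-distance-critical vertices.
   Context: For a path $P$ and vertices $x,y$ on $P$, $x$ precedes $y$ if $x=y$ or $x$ appears before $y$ on $P$; $P[x,y]$ is the subpath from $x$ to $y$. Paths from $x_1$ to $y_1$ and from $x_2$ to $y_2$ are internally vertex-disjoint if they share no vertex outside $\{x_1,y_1\}\cap\{x_2,y_2\}$. A pair $(a,b)$, not contained in $\{x_1,y_1\}\cap\{x_2,y_2\}$, is a concordant pair for paths $P_1$ (from $x_1$ to $y_1$) and $P_2$ (from $x_2$ to $y_2$) if $a$ precedes $b$ on both paths, $P_1[x_1,a]$ and $P_2[x_2,a]$ are internally vertex-disjoint, and $P_1[b,y_1]$ and $P_2[b,y_2]$ are internally vertex-disjoint. A vertex $w$ is $(x,y)$-distance-critical if $w\in\{x,y\}$ or removing $w$ from $G$ increases the distance from $x$ to $y$; $\delta(x,y)$ is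 the number of $(x,y)$-distance-critical vertices (so $\delta(x,x)=1$). *)

From HB Require Import structures.
From mathcomp Require Import all_boot all_order all_algebra.
From mathcomp Require Import boolp reals.
Set Implicit Arguments. Unset Strict Implicit. Unset Printing Implicit Defensive.
Import Order.TTheory GRing.Theory Num.Theory.
Local Open Scope ring_scope.

Section Graphs.
Variables (R : realType) (V : finType) (e : rel V) (w : V -> V -> R).

Definition is_path (p : seq V) (x y : V) : bool :=
  match p with
  | [::] => false
  | z :: q => [&& z == x, last z q == y, path e z q & uniq p]
  end.

Definition weight (p : seq V) : R :=
  \sum_(xy <- zip p (behead p)) w xy.1 xy.2.

Definition no_nonpos_cycle : Prop :=
  forall (x : V) (q : seq V), uniq (x :: q) -> cycle e (x :: q) ->
    0 < weight (x :: rcons q x).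

Definition shortest (p : seq V) (x y : V) : Prop :=
  is_path p x y /\ forall q, is_path q x y -> weight p <= weight q.

Definition precedes (p : seq V) (x y : V) : bool :=
  [&& x \in p, y \in p & (index x p <= index y p)%N].

Definition subpath (p : seq V) (x y : V) : seq V :=
  take ((index y p - index x p).+1)%N (drop (index x p) p).

Definition int_disjoint (p1 : seq V) (x1 y1 : V) (p2 : seq V) (x2 y2 : V)
  : Prop :=
  forall z, z \in p1 -> z \in p2 -> (z \in [:: x1; y1]) && (z \in [:: x2; y2]).

Definition concordant (p1 : seq V) (x1 y1 : V) (p2 : seq V) (x2 y2 : V)
  (a b : V) : Prop :=
  ~~ [&& a \in [:: x1; y1], a \in [:: x2; y2],
         b \in [:: x1; y1] & b \in [:: x2; y2]] /\
  precedes p1 a b /\ precedes p2 a b /\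
  int_disjoint (subpath p1 x1 a) x1 a (subpath p2 x2 a) x2 a /\
  int_disjoint (subpath p1 b y1) b y1 (subpath p2 b y2) b y2.

(* z is (x,y)-distance-critical: z is x or y, or removing z strictly
   increases the distance from x to y (to +oo if y becomes unreachable) *)
Definition dist_critical (x y z : V) : Prop :=
  z = x \/ z = y \/
  exists q, shortest q x y /\
    forall p, is_path p x y -> z \notin p -> weight q < weight p.

Definition delta (x y : V) : nat := #|[set z | `[< dist_critical x y z >]]|.

Definition n_internal_common (q1 q2 : seq V) (s1 t1 s2 t2 : V) : nat :=
  #|[set z | [&& z \in q1, z \in q2 &
                 ~~ ((z \in [:: s1; t1]) && (z \in [:: s2; t2]))]]|.

End Graphs.

(* Let I1, I2 be the u-v subpaths of P1, P2; both are shortest u-v paths, and a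
   critical vertex lies on every shortest u-v path.  Conversely, let z <> u, v be
   common to I1 and I2 and suppose some u-v path Rp avoiding z is no longer than
   I1.  Let b be the first vertex of Rp lying after z on I1 or I2, and a the last
   vertex before b lying before z on I1 or I2; between a and b, Rp avoids I1 and
   I2.  One walk follows the path containing a up to a, then Rp up to b, then the
   path containing b; the other follows, up to z and from z on, the paths not
   used by the first.  These u-v walks are no heavier than I1 and I2 and share
   only vertices common to I1 and I2 other than z.  Splicing them into P1 and P2
   gives shortest paths sharing fewer internal vertices (a walk no heavier than a
   window of a shortest path meets that path only inside the window, because
   cycles have positive weight), contradicting the minimality of (P1, P2). *)

From Pilot Require Import Defs.
From HB Require Import structures.
From mathcomp Require Import all_boot all_order all_algebra.
From mathcomp Require Import boolp reals.
From mathcomp Require Import zify.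
From mathcomp.algebra_tactics Require Import lra.
Set Implicit Arguments. Unset Strict Implicit. Unset Printing Implicit Defensive.
Import Order.TTheory GRing.Theory Num.Theory.
Local Open Scope ring_scope.

Section Slice.
Variable T : Type.
Implicit Types (p : seq T) (i j k : nat).

Definition slice p i j : seq T := take (j - i).+1 (drop i p).

Lemma size_slice p i j : (i <= j < size p)%N -> size (slice p i j) = (j - i).+1.
Proof. by move=> ijp; rewrite size_takel // size_drop; lia. Qed.

Lemma nth_slice x0 p i j k : (k <= j - i)%N ->
  nth x0 (slice p i j) k = nth x0 p (i + k).
Proof. by move=> kji; rewrite nth_take ?nth_drop //; lia. Qed.

Lemma head_slice x0 p i j : (i <= j < size p)%N -> head x0 (slice p i j) = nth x0 p i.
Proof. by move=> ijp; rewrite -nth0 nth_slice ?addn0. Qed.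

Lemma last_slice x0 p i j : (i <= j < size p)%N -> last x0 (slice p i j) = nth x0 p j.
Proof. by move=> ijp; rewrite -nth_last size_slice // nth_slice //; congr nth; lia. Qed.

Lemma slice_whole p : slice p 0 (size p).-1 = p.
Proof. by rewrite /slice drop0 take_oversize //; lia. Qed.

Lemma slice_cat p i j k : (i <= j <= k)%N -> (k < size p)%N ->
  slice p i k = slice p i j ++ behead (slice p j k).
Proof.
move=> ijk kp; have x0 : T by case: p kp => // x0.
apply: (@eq_from_nth _ x0) => [|n].
  by rewrite size_cat size_behead !size_slice //; lia.
rewrite size_slice; last lia.
move=> nk; rewrite nth_slice; last lia.
rewrite nth_cat size_slice; last lia.
case: ltnP => jn; first by rewrite nth_slice //; lia.
by rewrite nth_behead nth_slice; [congr nth|]; lia.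
Qed.

Lemma slice_slice p a b i j : (i <= j <= b - a)%N ->
  slice (slice p a b) i j = slice p (a + i) (a + j).
Proof.
move=> ij; rewrite /slice -[(b - a).+1](subnK (_ : i <= (b - a).+1)%N); last lia.
by rewrite -take_drop drop_drop take_takel; [congr take; [lia | congr drop; lia] | lia].
Qed.

Lemma slice_sorted (r : rel T) p i j : sorted r p -> sorted r (slice p i j).
Proof. by move=> sp; rewrite take_sorted // drop_sorted. Qed.

End Slice.

Section EqSlice.
Variable T : eqType.
Implicit Types (p : seq T) (i j k : nat).

Lemma eq_index p x y : x \in p -> (index x p == index y p) = (x == y).
Proof.
move=> xp; apply/eqP/eqP => [ixy | -> //].
by apply: (index_inj x xp _ ixy); rewrite -index_mem -ixy index_mem.
Qed.

Lemma slice_neq0 p i j : (i <= j < size p)%N -> slice p i j != [::].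
Proof. by move=> ijp; rewrite -size_eq0 size_slice. Qed.

Lemma mem_slice p i j y : y \in slice p i j -> y \in p.
Proof. by move/mem_take/mem_drop. Qed.

Lemma mem_slice_nth x0 p i j y : (i <= j < size p)%N -> y \in slice p i j ->
  exists2 k, (i <= k <= j)%N & y = nth x0 p k.
Proof.
move=> ijp /(nthP x0) [k]; rewrite size_slice // => kji <-.
by exists (i + k)%N; [lia | rewrite nth_slice].
Qed.

Lemma slice_uniq p i j : uniq p -> uniq (slice p i j).
Proof. by move=> up; rewrite take_uniq // drop_uniq. Qed.

Lemma mem_slice_uniq p i j y : (i <= j < size p)%N -> uniq p ->
  (y \in slice p i j) = (y \in p) && (i <= index y p <= j)%N.
Proof.
move=> ijp up; have x0 : T by case: p {up} ijp => // x0.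
apply/(nthP x0)/andP => [[k] | [yp /andP[iy yj]]].
  rewrite size_slice // => kji <-; rewrite nth_slice; last lia.
  by rewrite mem_nth ?index_uniq //; lia.
exists (index y p - i)%N; first by rewrite size_slice //; lia.
by rewrite nth_slice ?subnKC ?nth_index //; lia.
Qed.

End EqSlice.

Section Walks.
Variables (R : realType) (V : finType) (e : rel V) (w : V -> V -> R).
Local Notation weight := (weight w).
Local Notation is_path := (is_path e).
Implicit Types (p q W : seq V) (x y z : V).

Definition walk p x y : bool :=
  [&& p != [::], sorted e p, head x p == x & last x p == y].

Lemma is_pathE p x y : is_path p x y = walk p x y && uniq p.
Proof.
case: p => [|a p] //; rewrite /walk /=.
by case: (a == x); case: (last a p == y); case: (path e a p).
Qed.

Lemma is_path_walk p x y : is_path p x y -> walk p x y.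
Proof. by rewrite is_pathE => /andP[]. Qed.

Lemma is_path_uniq p x y : is_path p x y -> uniq p.
Proof. by rewrite is_pathE => /andP[]. Qed.

Lemma walk_neq0 p x y : walk p x y -> p != [::].
Proof. by case/andP. Qed.

Lemma walk_head p x y z : walk p x y -> head z p = x.
Proof. by case: p => // a p /and4P[_ _ /eqP]. Qed.

Lemma walk_last p x y z : walk p x y -> last z p = y.
Proof. by case: p => // a p /and4P[_ _ _ /eqP]. Qed.

Lemma walk_nth0 x0 p x y : walk p x y -> nth x0 p 0 = x.
Proof. by case: p => // a p /and4P[_ _ /eqP]. Qed.

Lemma walk_nth_last x0 p x y : walk p x y -> nth x0 p (size p).-1 = y.
Proof. by case: p => // a p /and4P[_ _ _ /eqP]; rewrite nth_last. Qed.

Lemma walk_size_gt0 p x y : walk p x y -> (0 < size p)%N.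
Proof. by case: p. Qed.

Lemma walk_mem_head p x y : walk p x y -> x \in p.
Proof. by move=> wp; rewrite -(walk_nth0 x wp) mem_nth // (walk_size_gt0 wp). Qed.

Lemma walk_mem_last p x y : walk p x y -> y \in p.
Proof.
by move=> wp; rewrite -(walk_nth_last x wp) mem_nth //= ltn_predL (walk_size_gt0 wp).
Qed.

Lemma walk_slice x0 p x y i j : walk p x y -> (i <= j < size p)%N ->
  walk (slice p i j) (nth x0 p i) (nth x0 p j).
Proof.
case/and4P=> _ sp _ _ ijp; have sn := slice_neq0 ijp.
rewrite /walk sn slice_sorted //=.
case: (slice p i j) sn (head_slice x0 ijp) (last_slice x0 ijp) => //= a s _ -> ->.
by rewrite !eqxx.
Qed.

Lemma walk_cat p q x y z : walk p x y -> walk q y z -> walk (p ++ behead q) x z.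
Proof.
case: p => [|a p]; first by case/and4P.
case: q => [|b q]; first by move=> _ /and4P[].
case/and4P=> _ sp /eqP/= <- /eqP/= hl /and4P[_ sq /eqP/= hb /eqP/= hl2].
move: sp sq => /= sp sq.
by rewrite /walk /= cat_path sp last_cat hl -hb hl2 sq !eqxx.
Qed.

Lemma mem_cat_behead p q y : y \in p ++ behead q -> (y \in p) || (y \in q).
Proof. by rewrite mem_cat => /orP[->//|/mem_behead ->]; rewrite orbT. Qed.

Lemma weight_cat_behead p q y : p != [::] -> q != [::] -> last y p = head y q ->
  weight (p ++ behead q) = weight p + weight q.
Proof.
case: p => [|a p] // _; case: q => [|b q] // _ /= <-.
rewrite /Defs.weight /=; elim: p a => [|c p IH] a /=; first by rewrite big_nil add0r.
by rewrite !big_cons IH addrA.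
Qed.

Lemma weight_walk_cat p q x y z : walk p x y -> walk q y z ->
  weight (p ++ behead q) = weight p + weight q.
Proof.
move=> wp wq; apply: (weight_cat_behead (y := y)); [exact: walk_neq0 wp | exact: walk_neq0 wq|].
by rewrite (walk_last _ wp) (walk_head _ wq).
Qed.

Lemma weight_slice_cat p i j k : (i <= j <= k)%N -> (k < size p)%N ->
  weight (slice p i k) = weight (slice p i j) + weight (slice p j k).
Proof.
move=> ijk kp; have x0 : V by case: p kp => // x0.
have ij : (i <= j < size p)%N by lia.
have jk : (j <= k < size p)%N by lia.
rewrite (slice_cat ijk kp) (weight_cat_behead (y := x0)) ?slice_neq0 //.
by rewrite last_slice ?head_slice.
Qed.

Lemma weight_split p k : (k < size p)%N ->
  weight p = weight (slice p 0 k) + weight (slice p k (size p).-1).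
Proof. by move=> kp; rewrite -weight_slice_cat ?slice_whole //; lia. Qed.

Lemma walk_prefix x0 p x y i : walk p x y -> (i < size p)%N ->
  walk (slice p 0 i) x (nth x0 p i).
Proof. by move=> wp ip; rewrite -{1}(walk_nth0 x0 wp); apply: walk_slice wp _. Qed.

Lemma walk_suffix x0 p x y i : walk p x y -> (i < size p)%N ->
  walk (slice p i (size p).-1) (nth x0 p i) y.
Proof.
move=> wp ip; rewrite -(walk_nth_last x0 wp); apply: walk_slice wp _; lia.
Qed.

Lemma subpathE p x y : subpath p x y = slice p (index x p) (index y p).
Proof. by []. Qed.

Lemma walk_index_head p x y : walk p x y -> index x p = 0%N.
Proof. by case: p => // a p /and4P[_ _ /eqP/= ->]; rewrite /= eqxx. Qed.

Lemma walk_index_last p x y : walk p x y -> uniq p -> index y p = (size p).-1.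
Proof.
move=> wp up; rewrite -(walk_nth_last x wp) index_uniq //.
by rewrite ltn_predL (walk_size_gt0 wp).
Qed.

Lemma precedes_head p x y z : walk p x y -> z \in p -> precedes p x z.
Proof. by move=> wp zp; rewrite /precedes (walk_mem_head wp) zp (walk_index_head wp). Qed.

Lemma precedes_last p x y z : walk p x y -> uniq p -> z \in p -> precedes p z y.
Proof.
move=> wp up zp; rewrite /precedes zp (walk_mem_last wp) (walk_index_last wp) //=.
by move: zp; rewrite -index_mem /=; lia.
Qed.

Lemma inner_notin_ends p s t u v z : walk p s t -> uniq p -> v \in p -> z \in p ->
  (index u p < index z p < index v p)%N -> z \notin [:: s; t].
Proof.
move=> wp up vp zp; rewrite !inE -(eq_index s zp) -(eq_index t zp).
rewrite (walk_index_head wp) (walk_index_last wp up).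
by move: vp; rewrite -index_mem /=; lia.
Qed.

Lemma walk_subpath p s t x y : walk p s t -> precedes p x y -> walk (subpath p x y) x y.
Proof.
move=> wp /and3P[xp yp xy].
have ijp : (index x p <= index y p < size p)%N by rewrite xy index_mem.
by have := walk_slice x wp ijp; rewrite !nth_index.
Qed.

Lemma subpath_whole p x y : walk p x y -> uniq p -> subpath p x y = p.
Proof.
by move=> wp up; rewrite subpathE (walk_index_head wp) (walk_index_last wp) ?slice_whole.
Qed.

Lemma mem_subpath p x y z : uniq p -> precedes p x y ->
  (z \in subpath p x y) = (z \in p) && (index x p <= index z p <= index y p)%N.
Proof. by move=> up /and3P[_ yp xy]; rewrite mem_slice_uniq // xy index_mem. Qed.

Lemma weight_subpath_cat p x y z : precedes p x y -> precedes p y z ->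
  weight (subpath p x z) = weight (subpath p x y) + weight (subpath p y z).
Proof.
move=> /and3P[_ _ xy] /and3P[_ zp yz]; apply: weight_slice_cat; first by rewrite xy.
by rewrite index_mem.
Qed.

Definition splice p i j W := slice p 0 i ++ behead (W ++ behead (slice p j (size p).-1)).

Section Splice.
Variables (x0 : V) (p W : seq V) (x y : V) (i j : nat).
Hypotheses (wp : walk p x y) (ijp : (i <= j < size p)%N)
  (wW : walk W (nth x0 p i) (nth x0 p j)).

Lemma walk_splice : walk (splice p i j W) x y.
Proof.
apply: walk_cat (walk_prefix x0 wp _) (walk_cat wW (walk_suffix x0 wp _)); lia.
Qed.

Lemma weight_splice : weight (splice p i j W) + weight (slice p i j) = weight p + weight W.
Proof.
have ip : (i < size p)%N by lia.
have jp : (j < size p)%N by lia.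
rewrite (weight_walk_cat (walk_prefix x0 wp ip) (walk_cat wW (walk_suffix x0 wp jp))).
rewrite (weight_walk_cat wW (walk_suffix x0 wp jp)) (weight_split ip).
rewrite (@weight_slice_cat p i j (size p).-1); [lra | lia | lia].
Qed.

End Splice.

Lemma mem_splice p i j W y : y \in splice p i j W ->
  [|| y \in slice p 0 i, y \in W | y \in slice p j (size p).-1].
Proof. by case/mem_cat_behead/orP=> [-> // | /mem_cat_behead/orP[] ->]; rewrite ?orbT. Qed.

Lemma mem_splice_uniq p i j W y : uniq p -> (i <= j < size p)%N ->
  y \in splice p i j W -> (y \in W) || (y \in p) && ~~ (i < index y p < j)%N.
Proof.
move=> up ijp; have ip : (0 <= i < size p)%N by lia.
have jp : (j <= (size p).-1 < size p)%N by lia.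
case/mem_splice/or3P=> [| -> // |].
- by rewrite (mem_slice_uniq y ip up) => /andP[-> iy]; rewrite orbC /=; lia.
- by rewrite (mem_slice_uniq y jp up) => /andP[-> iy]; rewrite orbC /=; lia.
Qed.

Lemma walk1 a : walk [:: a] a a.
Proof. by rewrite /walk /= !eqxx. Qed.

Lemma weight1 a : weight [:: a] = 0.
Proof. by rewrite /Defs.weight big_nil. Qed.

Lemma size_splice1 p i j a : (i <= j < size p)%N ->
  size (splice p i j [:: a]) = (size p - (j - i))%N.
Proof. by move=> ijp; rewrite size_cat /= size_behead !size_slice //; lia. Qed.

Lemma splice1_subset p i j a : {subset splice p i j [:: a] <= a :: p}.
Proof.
move=> y /mem_splice /or3P[/mem_slice yp | | /mem_slice yp]; rewrite inE ?yp ?orbT //.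
by rewrite inE => ->.
Qed.

Definition geodesic p := forall x0 i j W, (i <= j < size p)%N ->
  walk W (nth x0 p i) (nth x0 p j) -> weight (slice p i j) <= weight W.

Lemma geodesic_subpath_le p x y W : geodesic p -> precedes p x y -> walk W x y ->
  weight (subpath p x y) <= weight W.
Proof.
move=> gp /and3P[xp yp xy] wW; have ijp : (index x p <= index y p < size p)%N.
  by rewrite xy index_mem.
by apply: (gp x _ _ _ ijp); rewrite !nth_index.
Qed.

Lemma geodesic_slice p a b : (a <= b < size p)%N -> geodesic p -> geodesic (slice p a b).
Proof.
move=> abp gp x0 i j W; rewrite size_slice // => ijab.
rewrite !nth_slice ?slice_slice; try lia; apply: gp; lia.
Qed.

(* The two u-v paths are indexed by bool, so that the four ways in which Rp can
   cross from one side of z to the other are handled at once. *)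
Section Reroute.
Variables (I : bool -> seq V) (Rp : seq V) (u v z : V).
Hypotheses (wI : forall b, walk (I b) u v) (uI : forall b, uniq (I b))
  (zI : forall b, z \in I b) (zu : z != u) (zv : z != v)
  (wR : walk Rp u v) (zR : z \notin Rp).

Lemma index_z b : (0 < index z (I b) < (size (I b)).-1)%N.
Proof.
have := index_mem z (I b); rewrite zI /= => zb.
have := zu; rewrite -(eq_index u (zI b)) (walk_index_head (wI b)) /=.
have := zv; rewrite -(eq_index v (zI b)) (walk_index_last (wI b) (uI b)) /=.
lia.
Qed.

Lemma reroute_crossing : exists ia jb i j,
  [/\ (ia < jb < size Rp)%N,
      (nth u Rp ia \in I i) && (index (nth u Rp ia) (I i) < index z (I i))%N,
      (nth u Rp jb \in I j) && (index z (I j) < index (nth u Rp jb) (I j))%N &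
      forall k c, (ia < k < jb)%N -> nth u Rp k \notin I c].
Proof.
(* jb: first index of a vertex of Rp lying after z on some I b; ia: last index
   below jb of a vertex lying before z on some I b. *)
pose before y := [exists b, (y \in I b) && (index y (I b) < index z (I b))%N].
pose after y := [exists b, (y \in I b) && (index z (I b) < index y (I b))%N].
have R0 := walk_size_gt0 wR.
have exA : exists k, (k < size Rp)%N && after (nth u Rp k).
  exists (size Rp).-1; rewrite (walk_nth_last u wR); apply/andP; split; first lia.
  apply/existsP; exists true.
  rewrite (walk_index_last (wI _) (uI _)) (walk_mem_last (wI true)).
  by case/andP: (index_z true).
case: (ex_minnP exA) => jb /andP[jbR ajb] minjb.
have jb0 : (0 < jb)%N.
  rewrite lt0n; apply: contraTneq ajb => ->; rewrite (walk_nth0 u wR).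
  by apply/existsP => -[b]; rewrite (walk_index_head (wI _)) ltn0 andbF.
have exB : exists k, (k < jb)%N && before (nth u Rp k).
  exists 0%N; rewrite jb0 (walk_nth0 u wR); apply/existsP; exists true.
  by rewrite (walk_index_head (wI _)) (walk_mem_head (wI true)); case/andP: (index_z true).
have ubB : forall k, (k < jb)%N && before (nth u Rp k) -> (k <= jb)%N.
  by move=> k /andP[/ltnW].
case: (ex_maxnP exB ubB) => ia /andP[iajb /existsP[i bia]] maxia.
move: ajb => /existsP[j ajb].
exists ia, jb, i, j; split=> //; first lia.
move=> k c kmid; apply/negP => kI.
have kz : nth u Rp k != z by apply: contraNneq zR => <-; rewrite mem_nth //=; lia.
have : index (nth u Rp k) (I c) != index z (I c) by rewrite (eq_index _ kI).
rewrite neq_ltn => /orP[kb | ka].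
  suff : (k <= ia)%N by lia.
  by apply: maxia; rewrite (_ : k < jb)%N /=; [apply/existsP; exists c; rewrite kI | lia].
suff : (jb <= k)%N by lia.
by apply: minjb; rewrite (_ : k < size Rp)%N /=; [apply/existsP; exists c; rewrite kI | lia].
Qed.

Hypotheses (gI : forall b, geodesic (I b)) (lR : forall b, weight Rp <= weight (I b)).

Section Crossing.
Variables (a b : V) (ia jb : nat) (i j : bool).
Hypotheses (ijR : (ia < jb < size Rp)%N) (Ra : nth u Rp ia = a) (Rb : nth u Rp jb = b)
  (aI : a \in I i) (aZ : (index a (I i) < index z (I i))%N)
  (bI : b \in I j) (bZ : (index z (I j) < index b (I j))%N)
  (mid : forall k c, (ia < k < jb)%N -> nth u Rp k \notin I c).

(* switch takes the other path before z than detour, and the other path after z,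
   so the two walks can only meet in vertices common to I true and I false. *)
Definition detour :=
  subpath (I i) u a ++ behead (slice Rp ia jb ++ behead (subpath (I j) b v)).

Definition switch := subpath (I (~~ i)) u z ++ behead (subpath (I (~~ j)) z v).

Let prec_ua : precedes (I i) u a := precedes_head (wI i) aI.
Let prec_bv : precedes (I j) b v := precedes_last (wI j) (uI j) bI.
Let prec_uz b' : precedes (I b') u z := precedes_head (wI b') (zI b').
Let prec_zv b' : precedes (I b') z v := precedes_last (wI b') (uI b') (zI b').
Let ia_jb : (ia <= jb < size Rp)%N. Proof. lia. Qed.
Let ia_lt : (ia < size Rp)%N. Proof. lia. Qed.
Let jb_lt : (jb < size Rp)%N. Proof. lia. Qed.
Let last_lt : ((size Rp).-1 < size Rp)%N. Proof. lia. Qed.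
Let ia_jb_last : (ia <= jb <= (size Rp).-1)%N. Proof. lia. Qed.
Let wRab : walk (slice Rp ia jb) a b.
Proof. by rewrite -Ra -Rb; apply: walk_slice wR ia_jb. Qed.

Lemma walk_detour : walk detour u v.
Proof.
exact: walk_cat (walk_subpath (wI i) prec_ua) (walk_cat wRab (walk_subpath (wI j) prec_bv)).
Qed.

Lemma walk_switch : walk switch u v.
Proof.
exact: walk_cat (walk_subpath (wI _) (prec_uz _)) (walk_subpath (wI _) (prec_zv _)).
Qed.

Lemma weight_detour : weight detour <= weight (I i).
Proof.
have wA := walk_subpath (wI i) prec_ua; have wC := walk_subpath (wI j) prec_bv.
rewrite /detour (weight_walk_cat wA (walk_cat wRab wC)) (weight_walk_cat wRab wC).
have wRa : walk (slice Rp 0 ia) u a by rewrite -Ra; apply: walk_prefix wR ia_lt.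
have wRb : walk (slice Rp jb (size Rp).-1) b v by rewrite -Rb; apply: walk_suffix wR jb_lt.
have := geodesic_subpath_le (@gI i) prec_ua wRa.
have := geodesic_subpath_le (@gI j) prec_bv wRb.
have := lR i; rewrite (weight_split ia_lt) (weight_slice_cat ia_jb_last last_lt); lra.
Qed.

Lemma weight_switch : weight switch <= weight (I (~~ i)).
Proof.
have := geodesic_subpath_le (@gI (~~ j)) (prec_zv _) (walk_subpath (wI (~~ i)) (prec_zv _)).
rewrite -[in X in _ -> _ <= X](subpath_whole (wI (~~ i)) (uI _)).
rewrite /switch.
rewrite (weight_walk_cat (walk_subpath (wI _) (prec_uz _)) (walk_subpath (wI _) (prec_zv _))).
rewrite (weight_subpath_cat (prec_uz _) (prec_zv _)); lra.
Qed.

Lemma mem_detour y : y \in detour ->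
  [|| (y \in I i) && (index y (I i) < index z (I i))%N,
      (y \in I j) && (index z (I j) < index y (I j))%N | [forall c, y \notin I c]].
Proof.
case/mem_cat_behead/orP=> [| /mem_cat_behead/orP[]].
- rewrite mem_subpath // (walk_index_head (wI i)) => /andP[-> /andP[_ ya]] /=.
  by rewrite (leq_ltn_trans ya aZ).
- case/(mem_slice_nth u ia_jb) => k /andP[iak kjb] ->.
  case: (eqVneq k ia) => [-> | kia]; first by rewrite Ra aI aZ.
  case: (eqVneq k jb) => [-> | kjb']; first by rewrite Rb bI bZ orbT.
  apply/or3P/Or33/forallP => c; apply: mid.
  by rewrite ltn_neqAle eq_sym kia iak ltn_neqAle kjb' kjb.
- rewrite mem_subpath // (walk_index_last (wI j) (uI j)) => /andP[-> /andP[yb _]] /=.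
  by rewrite (leq_trans bZ yb) orbT.
Qed.

Lemma mem_switch y : y \in switch ->
  ((y \in I (~~ i)) && (index y (I (~~ i)) <= index z (I (~~ i)))%N) ||
  ((y \in I (~~ j)) && (index z (I (~~ j)) <= index y (I (~~ j)))%N).
Proof.
case/mem_cat_behead/orP.
- by rewrite mem_subpath ?prec_uz // (walk_index_head (wI _)) => /andP[-> /andP[_ ->]].
- rewrite mem_subpath ?prec_zv // (walk_index_last (wI _) (uI _)) => /andP[-> /andP[-> _]].
  by rewrite orbT.
Qed.

Lemma z_notin_detour : z \notin detour.
Proof.
by apply/negP => /mem_detour /or3P[/andP[_] | /andP[_] | /forallP/(_ i)]; rewrite ?ltnn ?zI.
Qed.

Lemma mem_detour_switch y : y \in detour -> y \in switch ->
  (y \in I true) && (y \in I false).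
Proof.
move=> /mem_detour /or3P[/andP[yi hi] | /andP[yj hj] | /forallP out] /mem_switch.
- case/orP=> /andP[yo ho]; first by case: (i) yi yo => -> ->.
  move: yi hi yo ho; case: (i); case: (j) => /= yi hi yo ho; rewrite ?yi ?yo //;
    by rewrite ltnNge ho in hi.
- case/orP=> /andP[yo ho]; last by case: (j) yj yo => -> ->.
  move: yj hj yo ho; case: (i); case: (j) => /= yj hj yo ho; rewrite ?yj ?yo //;
    by rewrite ltnNge ho in hj.
- by case/orP=> /andP[yI _]; move: (out (~~ i)) (out (~~ j)); rewrite yI ?andbF.
Qed.

End Crossing.

Lemma reroute : exists J : bool -> seq V,
  [/\ forall b, walk (J b) u v, forall b, weight (J b) <= weight (I b) &
      forall y, y \in J true -> y \in J false -> [&& y \in I true, y \in I false & y != z]].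
Proof.
have [ia [jb [i [j [ijR /andP[aI aZ] /andP[bI bZ] mid]]]]] := reroute_crossing.
have Ra := erefl (nth u Rp ia); have Rb := erefl (nth u Rp jb).
pose D := detour (nth u Rp ia) (nth u Rp jb) ia jb i j.
pose S := switch i j.
exists (fun c => if c == i then D else S); split.
- move=> c; case: (_ == _); last exact: walk_switch.
  exact: walk_detour ijR Ra Rb aI aZ bI bZ.
- move=> c; case: eqP => [-> | /eqP ci]; first exact: weight_detour ijR Ra Rb aI aZ bI bZ.
  have -> : c = ~~ i by move: ci; case: (c); case: (i).
  exact: weight_switch.
have common y : y \in D -> y \in S -> [&& y \in I true, y \in I false & y != z].
  move=> yD yS; case/andP: (mem_detour_switch ijR Ra Rb aI aZ bI bZ mid yD yS) => -> -> /=.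
  by apply: contraNneq (z_notin_detour ijR Ra Rb aI aZ bI bZ mid) => <-.
by move=> y /=; case: (i) => /= yJ1 yJ2; apply: common.
Qed.

End Reroute.

Lemma shortest_weight_eq p q x y : shortest e w p x y -> shortest e w q x y ->
  weight p = weight q.
Proof. by move=> [pp mp] [pq mq]; apply/eqP; rewrite eq_le mp // mq. Qed.

Lemma n_internal_common_ltn P1 P2 Q1 Q2 s1 t1 s2 t2 z :
  (forall y, y \in Q1 -> y \in Q2 -> [&& y \in P1, y \in P2 & y != z]) ->
  z \in P1 -> z \in P2 -> z \notin [:: s1; t1] ->
  (n_internal_common Q1 Q2 s1 t1 s2 t2 < n_internal_common P1 P2 s1 t1 s2 t2)%N.
Proof.
move=> QP zP1 zP2 zst; apply: proper_card; apply/properP; split.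
  apply/subsetP => y; rewrite !inE => /and3P[yQ1 yQ2 ->].
  by case/and3P: (QP y yQ1 yQ2) => -> ->.
exists z; first by rewrite inE zP1 zP2 (negbTE zst).
by rewrite inE; apply/negP => /and3P[zQ1 zQ2 _]; case/and3P: (QP z zQ1 zQ2); rewrite eqxx.
Qed.

Section NoNonposCycle.
Hypothesis cyc : no_nonpos_cycle e w.

Lemma closed_walk_gt0 c x : walk c x x -> (1 < size c)%N -> 0 < weight c.
Proof.
have [n] := ubnP (size c); elim: n => // n IH in c x *; rewrite ltnS => cn wc c1.
have [q cq] : exists q, c = x :: rcons q x.
  case: c c1 wc (walk_head x wc) (walk_last x wc) {cn} => [|a [|b c]] //= _ _ <-.
  by case/lastP: c => [|c d] /= <-; [exists [::] | exists (b :: c); rewrite last_rcons].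
(* Otherwise a repeated vertex splits c into two shorter closed walks. *)
case: (boolP (uniq (x :: q))) => [uq | /(uniqPn x) [i [j [ij jq eij]]]].
  by case/and4P: wc => _ + _ _; rewrite cq => /(cyc uq).
have ijc : (i <= j < size c)%N by rewrite cq /= size_rcons; move: jq => /=; lia.
have eij' : nth x c i = nth x c j.
  by rewrite cq -rcons_cons !nth_rcons /=; move: jq eij => /= jq; rewrite !ifT //; lia.
have wloop : walk (slice c i j) (nth x c i) (nth x c i).
  by rewrite {2}eij'; apply: walk_slice wc ijc.
have w1 : walk [:: nth x c i] (nth x c i) (nth x c j) by rewrite -eij' walk1.
have := weight_splice wc ijc w1; rewrite weight1 addr0 => <-.
have sq : size c = (size q).+2 by rewrite cq /= size_rcons.
move: jq => /= jq.
apply: addr_gt0;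
  [apply: (IH _ x _ (walk_splice wc ijc w1)) | apply: (IH _ (nth x c i) _ wloop)];
  rewrite ?size_splice1 ?size_slice //; lia.
Qed.

Lemma walk_to_path p x y : walk p x y ->
  exists q, [/\ is_path q x y, {subset q <= p} & weight q <= weight p].
Proof.
have [n] := ubnP (size p); elim: n => // n IH in p *; rewrite ltnS => pn wp.
case: (boolP (uniq p)) => [up | /(uniqPn x) [i [j [ij jp eij]]]].
  by exists p; split; rewrite ?is_pathE ?wp ?up.
have ijp : (i <= j < size p)%N by rewrite (ltnW ij) jp.
have w1 : walk [:: nth x p i] (nth x p i) (nth x p j) by rewrite -eij walk1.
have wcut := walk_splice wp ijp w1.
have [|q [pq qp lq]] := IH _ _ wcut; first by rewrite size_splice1 //; lia.
exists q; split=> //.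
  move=> z /qp /splice1_subset; rewrite inE => /orP[/eqP -> |//].
  by rewrite mem_nth //; lia.
have wloop : walk (slice p i j) (nth x p i) (nth x p i).
  by rewrite {2}eij; apply: walk_slice wp ijp.
have := closed_walk_gt0 wloop; rewrite size_slice // => /(_ (ltac:(lia))).
have := weight_splice wp ijp w1; rewrite weight1 addr0; lra.
Qed.

Lemma shortest_le_walk P s t W : shortest e w P s t -> walk W s t -> weight P <= weight W.
Proof.
case=> _ minP /walk_to_path [q [pq _ lq]]; exact: le_trans (minP q pq) lq.
Qed.

Lemma shortest_geodesic P s t : shortest e w P s t -> geodesic P.
Proof.
move=> sP x0 i j W ijP wW; have wP := is_path_walk (proj1 sP).
have := shortest_le_walk sP (walk_splice wP ijP wW).
have := weight_splice wP ijP wW; lra.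
Qed.

Lemma walk_backward_gt0 x0 p x y i j W : walk p x y -> (j < i < size p)%N ->
  walk W (nth x0 p i) (nth x0 p j) -> 0 < weight (slice p j i) + weight W.
Proof.
move=> wp jip wW; have jip' : (j <= i < size p)%N by lia.
have wji := walk_slice x0 wp jip'.
rewrite -(weight_walk_cat wji wW); apply: closed_walk_gt0 (walk_cat wji wW) _.
by rewrite size_cat size_slice //; move: (walk_size_gt0 wW); lia.
Qed.

Lemma shortest_detour_gt x0 P s t iu iv k S : shortest e w P s t ->
  (iu <= iv < size P)%N -> (k < size P)%N -> ~~ (iu <= k <= iv)%N ->
  walk S (nth x0 P iu) (nth x0 P iv) -> nth x0 P k \in S ->
  weight (slice P iu iv) < weight S.
Proof.
move=> sP uvP kP kout wS /(nthP x0) [m mS Sm].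
have wP := is_path_walk (proj1 sP); have gP := shortest_geodesic sP.
have wS1 := walk_prefix x0 wS mS; have wS2 := walk_suffix x0 wS mS.
rewrite Sm in wS1 wS2.
rewrite (weight_split mS).
case: (ltnP k iu) => [kiu | iuk].
  have kiuP : (k < iu < size P)%N by lia.
  have kivP : (k <= iv < size P)%N by lia.
  have := walk_backward_gt0 wP kiuP wS1; have := gP x0 k iv _ kivP wS2.
  rewrite (@weight_slice_cat P k iu iv); [lra | lia ..].
have ivkP : (iv < k < size P)%N by lia.
have iukP : (iu <= k < size P)%N by lia.
have := gP x0 iu k _ iukP wS1; have := walk_backward_gt0 wP ivkP wS2.
rewrite (@weight_slice_cat P iu iv k); [lra | lia ..].
Qed.

Lemma shortest_window_ends P s t u v S y : shortest e w P s t -> precedes P u v ->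
  walk S u v -> weight S <= weight (subpath P u v) -> y \in S -> y \in P ->
  ~~ (index u P < index y P < index v P)%N -> (y == u) || (y == v).
Proof.
move=> sP /and3P[uP vP uv] wS lS yS yP yout.
have uvP : (index u P <= index v P < size P)%N by rewrite uv index_mem.
have yP' : (index y P < size P)%N by rewrite index_mem.
rewrite -!(eq_index _ yP); apply: contraLR lS => /norP[yu yv].
have out : ~~ (index u P <= index y P <= index v P)%N by move: yout yu yv; lia.
rewrite -ltNge; have := shortest_detour_gt (x0 := u) sP uvP yP' out.
by rewrite !nth_index //; apply.
Qed.

Lemma shortest_subpath P s t u v : shortest e w P s t -> precedes P u v ->
  shortest e w (subpath P u v) u v.
Proof.
move=> sP uv; have [pP _] := sP; have wP := is_path_walk pP.
have wI := walk_subpath wP uv; have gI := geodesic_subpath_le (shortest_geodesic sP) uv.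
split; first by rewrite is_pathE wI subpathE slice_uniq // (is_path_uniq pP).
by move=> q /is_path_walk; apply: gI.
Qed.

Lemma shortest_subpath_geodesic P s t u v : shortest e w P s t -> precedes P u v ->
  geodesic (subpath P u v).
Proof.
move=> sP /and3P[_ vP uv]; rewrite subpathE; apply: geodesic_slice (shortest_geodesic sP).
by rewrite uv index_mem.
Qed.

Lemma shortest_replace P s t u v J : shortest e w P s t -> precedes P u v ->
  walk J u v -> weight J <= weight (subpath P u v) ->
  exists Q, shortest e w Q s t /\
    forall y, y \in Q -> (y \in J) || (y \in P) && ~~ (index u P < index y P < index v P)%N.
Proof.
move=> sP /and3P[uP vP uv] wJ lJ; have [pP minP] := sP.
have wP := is_path_walk pP; have uqP := is_path_uniq pP.
have uvP : (index u P <= index v P < size P)%N by rewrite uv index_mem.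
have wJ' : walk J (nth u P (index u P)) (nth u P (index v P)) by rewrite !nth_index.
have [Q [pQ QP lQ]] := walk_to_path (walk_splice wP uvP wJ').
exists Q; split.
  split=> // q pq; apply: le_trans (minP q pq); apply: le_trans lQ _.
  by have := weight_splice wP uvP wJ'; rewrite -subpathE; lra.
by move=> y /QP; apply: mem_splice_uniq.
Qed.

Section MinimalPair.
Variables (s1 t1 s2 t2 u v : V) (P1 P2 : seq V).
Hypotheses (sP1 : shortest e w P1 s1 t1) (sP2 : shortest e w P2 s2 t2)
  (minimal : forall Q1 Q2, shortest e w Q1 s1 t1 -> shortest e w Q2 s2 t2 ->
     (n_internal_common P1 P2 s1 t1 s2 t2 <= n_internal_common Q1 Q2 s1 t1 s2 t2)%N)
  (uv1 : precedes P1 u v) (uv2 : precedes P2 u v).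

Lemma no_shortcut z Rp : z \in subpath P1 u v -> z \in subpath P2 u v -> z != u -> z != v ->
  is_path Rp u v -> z \notin Rp -> weight (subpath P1 u v) < weight Rp.
Proof.
move=> z1 z2 zu zv pR zR.
have [uP1 vP1 _] := and3P uv1; have [uP2 vP2 _] := and3P uv2.
have uq1 := is_path_uniq (proj1 sP1).
move: (z1) (z2); rewrite !mem_subpath ?(is_path_uniq (proj1 sP2)) //.
move=> /andP[zP1 z1i] /andP[zP2 _].
have zin1 : (index u P1 < index z P1 < index v P1)%N.
  move: z1i zu zv; rewrite -(eq_index u zP1) -(eq_index v zP1) => /andP[uz zv1] nzu nzv.
  by rewrite !ltn_neqAle eq_sym nzu uz nzv zv1.
have zst := inner_notin_ends (is_path_walk (proj1 sP1)) uq1 vP1 zP1 zin1.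
rewrite ltNge; apply/negP => lR.
have eqI := shortest_weight_eq (shortest_subpath sP2 uv2) (shortest_subpath sP1 uv1).
pose I b := if b then subpath P1 u v else subpath P2 u v.
have sI b : shortest e w (I b) u v.
  by case: b; [apply: (shortest_subpath sP1) | apply: (shortest_subpath sP2)].
have wI b : walk (I b) u v by apply: is_path_walk (proj1 (sI b)).
have uI b : uniq (I b) by apply: is_path_uniq (proj1 (sI b)).
have zI b : z \in I b by case: b.
have gI b : geodesic (I b).
  by case: b; [apply: (shortest_subpath_geodesic sP1) | apply: (shortest_subpath_geodesic sP2)].
have lRI b : weight Rp <= weight (I b) by case: b => /=; rewrite ?eqI.
have [J [wJ lJ common]] := reroute wI uI zI zu zv (is_path_walk pR) zR gI lRI.
have lJ2 : weight (J true) <= weight (subpath P2 u v) by rewrite eqI; apply: lJ true.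
have lJ1 : weight (J false) <= weight (subpath P1 u v) by rewrite -eqI; apply: lJ false.
have [Q1 [sQ1 Q1P]] := shortest_replace sP1 uv1 (wJ true) (lJ true).
have [Q2 [sQ2 Q2P]] := shortest_replace sP2 uv2 (wJ false) (lJ false).
have ends y P s t Q : shortest e w P s t -> precedes P u v -> walk Q u v ->
    weight Q <= weight (subpath P u v) -> y \in Q -> y \in P ->
    ~~ (index u P < index y P < index v P)%N -> [&& y \in P1, y \in P2 & y != z].
  move=> sP uv wQ lQ yQ yP yout; case/orP: (shortest_window_ends sP uv wQ lQ yQ yP yout).
    by move/eqP ->; rewrite uP1 uP2 eq_sym zu.
  by move/eqP ->; rewrite vP1 vP2 eq_sym zv.
have QP y : y \in Q1 -> y \in Q2 -> [&& y \in P1, y \in P2 & y != z].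
  move=> /Q1P /orP[yJ1 | /andP[yP1 o1]] /Q2P /orP[yJ2 | /andP[yP2 o2]].
  - by case/and3P: (common y yJ1 yJ2) => /mem_slice -> /mem_slice -> ->.
  - exact: ends sP2 uv2 (wJ true) lJ2 yJ1 yP2 o2.
  - exact: ends sP1 uv1 (wJ false) lJ1 yJ2 yP1 o1.
  - by rewrite yP1 yP2 /=; apply: contraNneq o1 => ->.
have := minimal sQ1 sQ2; rewrite leqNgt => /negP; apply.
exact: n_internal_common_ltn QP zP1 zP2 zst.
Qed.

Lemma common_vertex_critical z : z \in subpath P1 u v -> z \in subpath P2 u v ->
  dist_critical e w u v z.
Proof.
move=> z1 z2; case: (eqVneq z u) => [-> | zu]; first by left.
case: (eqVneq z v) => [-> | zv]; first by right; left.
right; right; exists (subpath P1 u v); split; first exact: shortest_subpath sP1 uv1.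
by move=> p pp zp; apply: no_shortcut z1 z2 zu zv pp zp.
Qed.

End MinimalPair.

End NoNonposCycle.

Lemma dist_critical_mem x y z p : dist_critical e w x y z -> shortest e w p x y -> z \in p.
Proof.
move=> [-> | [-> | [q [[pq _] hq]]]] [pp minp].
- exact: walk_mem_head (is_path_walk pp).
- exact: walk_mem_last (is_path_walk pp).
- by apply/negPn/negP => zp; have := hq p pp zp; rewrite ltNge minp.
Qed.

End Walks.

Unset Implicit Arguments.

Theorem lemma5 (R : realType) (V : finType) (e : rel V) (w : V -> V -> R)
  (s1 t1 s2 t2 : V) (P1 P2 : seq V) (u v : V) :
  no_nonpos_cycle e w ->
  (exists p, is_path e p s1 t1) ->
  (exists p, is_path e p s2 t2) ->
  shortest e w P1 s1 t1 ->
  shortest e w P2 s2 t2 ->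
  (forall Q1 Q2, shortest e w Q1 s1 t1 -> shortest e w Q2 s2 t2 ->
     (n_internal_common P1 P2 s1 t1 s2 t2 <= n_internal_common Q1 Q2 s1 t1 s2 t2)%N) ->
  concordant P1 s1 t1 P2 s2 t2 u v ->
  #|[set z | (z \in subpath P1 u v) && (z \in subpath P2 u v)]| = delta e w u v /\
  (forall z, (z \in subpath P1 u v) && (z \in subpath P2 u v) <->
             dist_critical e w u v z).
Proof.
move=> cyc _ _ sP1 sP2 minimal [_ [uv1 [uv2 _]]].
have critical z :
    (z \in subpath P1 u v) && (z \in subpath P2 u v) <-> dist_critical e w u v z.
  split=> [/andP[z1 z2] | zc].
    exact: (common_vertex_critical cyc sP1 sP2 minimal uv1 uv2 z1 z2).
  by rewrite (dist_critical_mem zc (shortest_subpath cyc sP1 uv1))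
             (dist_critical_mem zc (shortest_subpath cyc sP2 uv2)).
split=> //; apply: eq_card => z; rewrite !inE.
by apply/idP/asboolP => /critical.
Qed.
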